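(* Let $\Lambda$ be a lattice and $\Lambda'\subseteq\Lambda$ a sublattice of finite index. Then $\Lambda'$ is characteristic if and only if the index of $\Lambda'$ in $\Lambda$ is coprime to $p$.
   Context: $K=\mathrm{GF}(p^r)$, $\bar K$ an algebraic closure; a lattice is a free abelian group of finite rank. A sublattice $\Lambda'\subseteq\Lambda$ is characteristic if $\Lambda'=\bigcap_{i=1}^m\ker(\theta_i)$ for some finitely many homomorphisms $\theta_1,\ldots,\theta_m:\Lambda\to\bar K^\times$. *)

From HB Require Import structures.
From mathcomp Require Import all_boot all_order all_algebra all_field.
Set Implicit Arguments. Unset Strict Implicit. Unset Printing Implicit Defensive.
Import GRing.Theory Num.Theory.
Local Open Scope ring_scope.

(* The lattice Lambda is modelled as Z^n = 'rV[int]_n (every free abelian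
   group of rank n is isomorphic to it). *)
Notation lattice n := 'rV[int]_n.

Definition sublattice n (S : {pred lattice n}) : Prop :=
  (0 \in S) /\ (forall x y, x \in S -> y \in S -> x - y \in S).

(* s is a complete, irredundant list of representatives of Lambda / S;
   hence the index [Lambda : S] is finite and equals size s. *)
Definition coset_transversal n (S : {pred lattice n}) (s : seq (lattice n)) : Prop :=
  (forall x, exists2 y, y \in s & x - y \in S) /\
  (forall i j, (i < size s)%N -> (j < size s)%N ->
      nth 0 s i - nth 0 s j \in S -> i = j).

(* group homomorphism Lambda -> L^x, represented as a map into L
   with nonzero values that is multiplicative. *)
Definition mult_hom n (L : fieldType) (theta : lattice n -> L) : Prop :=
  (forall x, theta x != 0) /\ (forall x y, theta (x + y) = theta x * theta y).

Definition characteristic n (L : fieldType) (S : {pred lattice n}) : Prop :=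
  exists m (theta : 'I_m -> lattice n -> L),
    (forall i, mult_hom (theta i)) /\
    (forall x, x \in S <-> forall i, theta i x = 1).

From HB Require Import structures.
From mathcomp Require Import all_boot all_order all_algebra all_field.
From mathcomp Require Import fingroup perm pgroup cyclic ring.
From Stdlib Require Import ClassicalEpsilon.
Set Implicit Arguments. Unset Strict Implicit. Unset Printing Implicit Defensive.
Import GRing.Theory.
Local Open Scope ring_scope.

(* Let N be the index of S.  Translation of the N cosets makes Lambda act on
   them through a group of permutations of order N, whose kernel is S.
   If p divides N, Cauchy's theorem gives x outside S with p x in S; but in
   characteristic p, theta(x)^p = 1 forces theta(x) = 1, so no family of
   characters cuts out S.  If p does not divide N, an x outside S has an order
   d modulo S dividing N, hence prime to p, so there is a d-th root of unity
   c <> 1 in L; the character of S + Zx that is 1 on S and sends x to c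
   extends to all of Lambda one generator at a time, because L^x is
   divisible. *)

Section Subgroup.
Variables (V : zmodType) (H : V -> Prop).

Definition is_subgroup := H 0 /\ (forall x y, H x -> H y -> H (x - y)).

Hypothesis hH : is_subgroup.

Lemma subgroupN x : H x -> H (- x).
Proof. by move=> hx; rewrite -sub0r; apply: hH.2 hx; exact: hH.1. Qed.

Lemma subgroupD x y : H x -> H y -> H (x + y).
Proof. by move=> hx hy; rewrite -[y]opprK; apply: hH.2 hx _; exact: subgroupN. Qed.

Lemma subgroupMn x k : H x -> H (x *+ k).
Proof.
move=> hx; elim: k => [|k IHk]; first by rewrite mulr0n; exact: hH.1.
by rewrite mulrS; apply: subgroupD.
Qed.

Lemma subgroupMz x (j : int) : H x -> H (x *~ j).
Proof.
by case: j => k hx; [exact: subgroupMn | rewrite NegzE mulrNz; exact/subgroupN/subgroupMn].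
Qed.

Lemma subgroup_subC x y : H (x - y) -> H (y - x).
Proof. by move/subgroupN; rewrite opprB. Qed.

Lemma subgroup_subtrans x y z : H (x - y) -> H (y - z) -> H (x - z).
Proof. by move=> hxy hyz; have := subgroupD hxy hyz; rewrite addrA subrK. Qed.

End Subgroup.

Section MultHomOn.
Variables (V : zmodType) (L : fieldType) (H : V -> Prop) (chi : V -> L).

Definition mult_hom_on :=
  (forall u, H u -> chi u != 0) /\
  (forall u v, H u -> H v -> chi (u + v) = chi u * chi v).

Hypotheses (hH : is_subgroup H) (hchi : mult_hom_on).

Lemma mult_hom_on0 : chi 0 = 1.
Proof.
have h0 := hH.1; apply: (mulfI (hchi.1 0 h0)).
by rewrite -hchi.2 // addr0 mulr1.
Qed.

Lemma mult_hom_onN u : H u -> chi (- u) = (chi u)^-1.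
Proof.
move=> hu; apply: (mulfI (hchi.1 u hu)).
rewrite -hchi.2 ?subrr ?mult_hom_on0 ?mulfV ?hchi.1 //; exact: subgroupN.
Qed.

Lemma mult_hom_onMn u k : H u -> chi (u *+ k) = chi u ^+ k.
Proof.
move=> hu; elim: k => [|k IHk]; first by rewrite mulr0n mult_hom_on0.
by rewrite mulrS exprS hchi.2 ?IHk //; apply: subgroupMn.
Qed.

Lemma mult_hom_onMz u (j : int) : H u -> chi (u *~ j) = chi u ^ j.
Proof.
case: j => k hu; first exact: mult_hom_onMn.
by rewrite NegzE mulrNz mult_hom_onN ?mult_hom_onMn ?invr_expz //; apply: subgroupMn.
Qed.

End MultHomOn.

Lemma mult_homMn n (L : fieldType) (theta : lattice n -> L) x k :
  mult_hom theta -> theta (x *+ k) = theta x ^+ k.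
Proof. by case=> nz hD; apply: (@mult_hom_onMn _ _ (fun=> True)). Qed.

Lemma pchar_expr_eq1 (L : fieldType) p (a : L) :
  p \in [pchar L] -> a ^+ p = 1 -> a = 1.
Proof. by move=> pc ap; apply: (fmorph_inj (pFrobenius_aut pc)); rewrite rmorph1. Qed.

Lemma closed_field_exists_root (L : closedFieldType) (a : L) d :
  (0 < d)%N -> exists c : L, c ^+ d = a.
Proof.
move=> d_gt0; have /closed_rootP[c] : size ('X^d - a%:P) != 1%N.
  by rewrite size_XnsubC // eqSS -lt0n.
by rewrite rootE !hornerE subr_eq0 => /eqP; exists c.
Qed.

Lemma closed_field_nontrivial_root1 (L : closedFieldType) d :
  (1 < d)%N -> d%:R != 0 :> L -> exists2 c : L, c ^+ d = 1 & c != 1.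
Proof.
move=> d_gt1 dn0.
have /closed_rootP[c] : size (\poly_(i < d) 1 : {poly L}) != 1%N.
  by rewrite size_poly_eq ?oner_neq0 // neq_ltn d_gt1 orbT.
rewrite /root horner_poly; under eq_bigr do rewrite mul1r; move=> /eqP sum0.
exists c; first by apply/eqP; rewrite -subr_eq0 subrX1 sum0 mulr0.
apply: contraNneq dn0 => c1; rewrite -sum0 c1.
by under eq_bigr do rewrite expr1n; rewrite sumr_const card_ord.
Qed.

Definition adjoin (V : zmodType) (H : V -> Prop) (g : V) : V -> Prop :=
  fun v => exists j : int, H (v - g *~ j).

Section Adjoin.
Variables (V : zmodType) (H : V -> Prop) (g : V).
Hypothesis hH : is_subgroup H.

Lemma adjoin_subgroup : is_subgroup (adjoin H g).
Proof.
split; first by exists 0; rewrite mulr0z subr0; exact: hH.1.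
move=> x y [i hi] [j hj]; exists (i - j).
have -> : x - y - g *~ (i - j) = (x - g *~ i) - (y - g *~ j).
  by rewrite mulrzBr !opprB addrACA [RHS]addrACA (addrC (- y)).
exact: hH.2.
Qed.

Lemma adjoin_sub v : H v -> adjoin H g v.
Proof. by exists 0; rewrite mulr0z subr0. Qed.

Lemma adjoin_gen : adjoin H g g.
Proof. by exists 1; rewrite mulr1z subrr; exact: hH.1. Qed.

Lemma exists_order_mod N0 : (0 < N0)%N -> H (g *+ N0) ->
  exists d, [/\ (0 < d)%N, H (g *+ d), (d %| N0)%N
              & forall t : int, H (g *~ t) -> (d%:Z %| t)%Z].
Proof.
move=> N0_gt0 hN0.
pose P k := (0 < k)%N && (if excluded_middle_informative (H (g *+ k)) then true else false).
have exP : exists k, P k.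
  by exists N0; rewrite /P N0_gt0; case: excluded_middle_informative.
case: (ex_minnP exP) => d /andP[d_gt0]; case: excluded_middle_informative => // hd _ dmin.
have d_dvd t : H (g *~ t) -> (d%:Z %| t)%Z.
  move=> ht; apply/dvdz_mod0P.
  have hr : H (g *~ (t %% d%:Z)%Z).
    have -> : (t %% d%:Z)%Z = t - (t %/ d%:Z)%Z * d%:Z by rewrite {2}(divz_eq t d%:Z); ring.
    by rewrite mulrzBr [_ * d%:Z]mulrC mulrzA; apply: hH.2 ht _; apply: subgroupMz.
  have r_ge0 : 0 <= (t %% d%:Z)%Z by rewrite modz_ge0 // eqz_nat -lt0n.
  have r_lt : (t %% d%:Z)%Z < d%:Z by rewrite ltz_pmod // ltz_nat.
  move: hr r_ge0 r_lt; case: (t %% d%:Z)%Z => // [[|k]] // hk _; rewrite ltz_nat => kd.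
  have := dmin k.+1; rewrite /P; case: excluded_middle_informative => [_ /(_ isT) | /(_ hk) //].
  by rewrite leqNgt kd.
exists d; split => //.
by have := d_dvd N0 hN0; rewrite dvdzE.
Qed.

Variables (L : fieldType) (chi : V -> L) (d : nat) (c : L).
Hypotheses (hchi : mult_hom_on H chi) (d_gt0 : (0 < d)%N) (hgd : H (g *+ d)).
Hypotheses (d_dvd : forall t : int, H (g *~ t) -> (d%:Z %| t)%Z).
Hypothesis c_root : c ^+ d = chi (g *+ d).

Lemma adjoin_root_neq0 : c != 0.
Proof. by apply: contraTneq (hchi.1 _ hgd) => c0; rewrite -c_root c0 expr0n gtn_eqF // eqxx. Qed.

Lemma mult_hom_on_gen_mulz t : H (g *~ t) -> chi (g *~ t) = c ^ t.
Proof.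
move=> ht; have /dvdzP[q ->] := d_dvd ht.
rewrite [q * _]mulrC mulrzA (mult_hom_onMz hH hchi _ hgd) -c_root.
by rewrite (_ : c ^+ d = c ^ d%:Z) // exprz_exp.
Qed.

(* Independent of the j chosen by epsilon, by mult_hom_on_gen_mulz. *)
Definition adjoin_ext (v : V) : L :=
  let j := epsilon (inhabits 0) (fun j : int => H (v - g *~ j)) in chi (v - g *~ j) * c ^ j.

Lemma adjoin_extE v j : H (v - g *~ j) -> adjoin_ext v = chi (v - g *~ j) * c ^ j.
Proof.
move=> hj; rewrite /adjoin_ext; set j' := epsilon _ _.
have hj' : H (v - g *~ j') := epsilon_spec (inhabits 0) (fun j => H (v - g *~ j)) (ex_intro _ j hj).
have hjj : H (g *~ (j - j')).
  by rewrite mulrzBr; have := hH.2 _ _ hj' hj; rewrite opprB addrC addrA subrK.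
have -> : v - g *~ j' = (v - g *~ j) + g *~ (j - j') by rewrite mulrzBr addrA subrK.
rewrite (hchi.2 _ _ hj hjj) mult_hom_on_gen_mulz // -mulrA -expfzDr ?adjoin_root_neq0 //.
by rewrite subrK.
Qed.

Lemma mult_hom_on_adjoin_ext : mult_hom_on (adjoin H g) adjoin_ext.
Proof.
split=> [u [j hj] | u v [i hi] [j hj]].
  by rewrite (adjoin_extE hj) mulf_neq0 ?expfz_neq0 ?adjoin_root_neq0 ?hchi.1.
have hij : H (u + v - g *~ (i + j)) by rewrite mulrzDr opprD addrACA; exact: subgroupD.
rewrite (adjoin_extE hi) (adjoin_extE hj) (adjoin_extE hij) mulrzDr opprD addrACA hchi.2 //.
by rewrite expfzDr ?adjoin_root_neq0 // mulrACA.
Qed.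

Lemma adjoin_ext_id u : H u -> adjoin_ext u = chi u.
Proof. by move=> hu; rewrite (@adjoin_extE u 0) ?mulr0z ?subr0 ?expr0z ?mulr1. Qed.

Lemma adjoin_ext_gen : adjoin_ext g = c.
Proof.
have hg : H (g - g *~ 1) by rewrite mulr1z subrr; exact: hH.1.
by rewrite (adjoin_extE hg) mulr1z subrr (mult_hom_on0 hH hchi) mul1r expr1z.
Qed.

End Adjoin.

Lemma mult_hom_on_extend_seq (V : zmodType) (L : closedFieldType) N0 (gs : seq V) :
  (0 < N0)%N -> forall (H : V -> Prop) (chi : V -> L),
  is_subgroup H -> (forall v, H (v *+ N0)) -> mult_hom_on H chi ->
  exists H' (chi' : V -> L), [/\ is_subgroup H', mult_hom_on H' chi',
    forall g, g \in gs -> H' g & forall u, H u -> H' u /\ chi' u = chi u].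
Proof.
move=> N0_gt0; elim: gs => [|g gs IHgs] H chi hH hN0 hchi; first by exists H, chi.
have [d [d_gt0 hgd _ d_dvd]] := exists_order_mod hH N0_gt0 (hN0 g).
have [c c_root] := closed_field_exists_root (chi (g *+ d)) d_gt0.
have [H' [chi' [hH' hchi' gsH' ext']]] := IHgs _ _ (adjoin_subgroup g hH)
  (fun v => adjoin_sub g (hN0 v)) (mult_hom_on_adjoin_ext hH hchi d_gt0 hgd d_dvd c_root).
exists H', chi'; split => // [x | u hu].
  by rewrite inE => /predU1P[-> | /gsH' //]; exact: (ext' _ (adjoin_gen g hH)).1.
have [H'u ->] := ext' u (adjoin_sub g hu); split => //.
exact: (adjoin_ext_id hH hchi d_gt0 hgd d_dvd c_root).
Qed.

Lemma mult_hom_on_extend_lattice n (L : closedFieldType) (H : lattice n -> Prop)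
    (chi : lattice n -> L) N0 :
  (0 < N0)%N -> is_subgroup H -> (forall v, H (v *+ N0)) -> mult_hom_on H chi ->
  exists2 theta, mult_hom theta & forall u, H u -> theta u = chi u.
Proof.
move=> N0_gt0 hH hN0 hchi.
have [H' [theta [hH' [nz hD] gensH' ext']]] :=
  mult_hom_on_extend_seq [seq delta_mx 0 j | j <- enum 'I_n] N0_gt0 hH hN0 hchi.
have H'T v : H' v.
  rewrite (row_sum_delta v); apply: (big_ind H') => [|x y|j _]; first exact: hH'.1.
    exact: subgroupD.
  rewrite -[v 0 j]intz scaler_int; apply: (subgroupMz hH'); apply: gensH'.
  by apply/mapP; exists j; rewrite ?mem_enum.
exists theta; first by split=> [u | u v]; [apply: nz | apply: hD].
by move=> u /ext'[].
Qed.

Section Index.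
Variables (n : nat) (S : {pred lattice n}) (s : seq (lattice n)).
Hypotheses (hS : sublattice S) (hs : coset_transversal S s).
Local Notation N := (size s).

Let hSg : is_subgroup (fun v => v \in S) := hS.

Lemma transversal_inj (i j : 'I_N) : s`_i - s`_j \in S -> i = j.
Proof. by move=> sij; apply: val_inj; exact: hs.2 _ _ (ltn_ord i) (ltn_ord j) sij. Qed.

Lemma coset_of_subproof x : (find (fun y => (x - y)%R \in S) s < N)%N.
Proof. by rewrite -has_find; have [y ys xy] := hs.1 x; apply/hasP; exists y. Qed.

Definition coset_of x : 'I_N := Ordinal (coset_of_subproof x).

Lemma index_gt0 : (0 < N)%N.
Proof. exact: leq_ltn_trans (leq0n _) (ltn_ord (coset_of 0)). Qed.

Lemma coset_of_mem x : x - s`_(coset_of x) \in S.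
Proof.
have := nth_find 0 (a := fun y => x - y \in S) (s := s).
by rewrite has_find coset_of_subproof; apply.
Qed.

Lemma coset_of_eq x y : coset_of x = coset_of y <-> x - y \in S.
Proof.
split=> [exy | xy].
  apply: (subgroup_subtrans hSg (coset_of_mem x)); rewrite exy.
  by have := subgroup_subC hSg (coset_of_mem y).
apply: transversal_inj; apply: (subgroup_subtrans hSg (subgroup_subC hSg (coset_of_mem x))).
by have := subgroup_subtrans hSg xy (coset_of_mem y).
Qed.

Lemma coset_translate_inj x : injective (fun i : 'I_N => coset_of (s`_i + x)).
Proof. by move=> i j /coset_of_eq; rewrite [X in _ - X]addrC addrKA => /transversal_inj. Qed.

Definition coset_perm x : {perm 'I_N} := perm (@coset_translate_inj x).

Lemma coset_permE x i : coset_perm x i = coset_of (s`_i + x).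
Proof. exact: permE. Qed.

Lemma coset_permD x y : coset_perm (x + y) = (coset_perm x * coset_perm y)%g.
Proof.
apply/permP => i; rewrite permM !coset_permE; apply/coset_of_eq.
by rewrite addrA [X in _ - X]addrC addrKA coset_of_mem.
Qed.

Lemma coset_perm0 : coset_perm 0 = 1%g.
Proof. by apply: (mulgI (coset_perm 0)); rewrite -coset_permD addr0 mulg1. Qed.

Lemma coset_permX x k : (coset_perm x ^+ k)%g = coset_perm (x *+ k).
Proof.
elim: k => [|k IHk]; first by rewrite expg0 mulr0n coset_perm0.
by rewrite expgSr IHk mulrSr coset_permD.
Qed.

Lemma coset_perm_eq x y : coset_perm x = coset_perm y <-> x - y \in S.
Proof.
split=> [/permP/(_ (coset_of 0)) | xy].
  by rewrite !coset_permE => /coset_of_eq; rewrite [X in X - _]addrC addrKA.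
by apply/permP => i; rewrite !coset_permE; apply/coset_of_eq; rewrite [X in X - _]addrC addrKA.
Qed.

Lemma coset_perm_eq1 x : coset_perm x = 1%g <-> x \in S.
Proof. by rewrite -coset_perm0 -[x in x \in S]subr0; apply: coset_perm_eq. Qed.

Definition coset_group : {set {perm 'I_N}} := [set coset_perm s`_i | i : 'I_N].

Lemma mem_coset_group x : coset_perm x \in coset_group.
Proof. by apply/imsetP; exists (coset_of x) => //; apply/coset_perm_eq/coset_of_mem. Qed.

Lemma coset_group_set : group_set coset_group.
Proof.
apply/andP; split; first by rewrite -coset_perm0 mem_coset_group.
apply/subsetP => _ /mulsgP[_ _ /imsetP[i _ ->] /imsetP[j _ ->] ->].
by rewrite -coset_permD mem_coset_group.
Qed.

Canonical coset_group_group := Group coset_group_set.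

Lemma card_coset_group : #|coset_group| = N.
Proof. by rewrite card_imset ?card_ord // => i j /coset_perm_eq/transversal_inj. Qed.

Lemma index_mulrn_mem x : x *+ N \in S.
Proof.
by have := expg_cardG (mem_coset_group x); rewrite card_coset_group coset_permX => /coset_perm_eq1.
Qed.

Lemma exists_order_prime_mod p : prime p -> (p %| N)%N ->
  exists2 x, x \notin S & x *+ p \in S.
Proof.
move=> p_pr; rewrite -card_coset_group => /(Cauchy p_pr)[_ /imsetP[i _ ->] ord_i].
exists s`_i; last by apply/coset_perm_eq1; rewrite -coset_permX -ord_i expg_order.
apply/negP => /coset_perm_eq1 si1.
by move: (prime_gt1 p_pr); rewrite -ord_i si1 order1.
Qed.

Lemma coprime_index_of_characteristic (L : fieldType) p :
  p \in [pchar L] -> characteristic L S -> coprime N p.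
Proof.
move=> pc [m [theta [hom memS]]]; have p_pr := pcharf_prime pc.
rewrite coprime_sym prime_coprime //; apply/negP.
move=> /(exists_order_prime_mod p_pr)[x /negP xS /memS px1]; apply/xS/memS => i.
by apply: (pchar_expr_eq1 pc); rewrite -(mult_homMn _ _ (hom i)).
Qed.

Lemma separating_mult_hom (L : closedFieldType) p x :
  p \in [pchar L] -> coprime N p -> x \notin S ->
  exists theta : lattice n -> L,
    [/\ mult_hom theta, forall v, v \in S -> theta v = 1 & theta x != 1].
Proof.
move=> pc copNp xS.
have [d [d_gt0 xdS dN d_dvd]] := exists_order_mod hSg index_gt0 (index_mulrn_mem x).
have d_gt1 : (1 < d)%N.
  by rewrite ltn_neqAle d_gt0 andbT; apply: contraNneq xS => d1; rewrite -d1 mulr1n in xdS.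
have dn0 : d%:R != 0 :> L.
  rewrite -(dvdn_pcharf pc) -prime_coprime ?(pcharf_prime pc) // coprime_sym.
  exact: coprime_dvdl dN copNp.
have [c cd1 c_neq1] := closed_field_nontrivial_root1 d_gt1 dn0.
have hone : mult_hom_on (fun v => v \in S) (fun=> 1 : L).
  by split=> *; rewrite ?oner_neq0 ?mulr1.
have [theta hom ext] := mult_hom_on_extend_lattice index_gt0 (adjoin_subgroup x hSg)
  (fun v => adjoin_sub x (index_mulrn_mem v))
  (mult_hom_on_adjoin_ext hSg hone d_gt0 xdS d_dvd cd1).
exists theta; split => // [v vS | ].
  by rewrite ext ?(adjoin_ext_id hSg hone d_gt0 xdS d_dvd cd1) //; apply: adjoin_sub.
by rewrite ext ?(adjoin_ext_gen hSg hone d_gt0 xdS d_dvd cd1) //; apply: adjoin_gen.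
Qed.

Lemma characteristic_of_coprime_index (L : closedFieldType) p :
  p \in [pchar L] -> coprime N p -> characteristic L S.
Proof.
move=> pc copNp.
have sep (i : 'I_N) : exists theta : lattice n -> L,
    [/\ mult_hom theta, forall v, v \in S -> theta v = 1 & theta s`_i = 1 -> s`_i \in S].
  have [siS | /(separating_mult_hom pc copNp)[theta [hom th1 thi]]] := boolP (s`_i \in S).
    by exists (fun=> 1); split=> //; split=> *; rewrite ?oner_neq0 ?mulr1.
  by exists theta; split=> // /eqP; rewrite (negbTE thi).
have [theta htheta] := fin_all_exists sep.
exists N, theta; split=> [i | x]; first by case: (htheta i).
split=> [xS i | x1]; first by case: (htheta i) => _ th1 _; apply: th1.
set k := coset_of x; have [[_ hD] th1 thS] := htheta k.
rewrite -(subrK s`_k x); apply: (subgroupD hSg (coset_of_mem x)); apply: thS.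
by rewrite -(x1 k) -(subrK s`_k x) hD (th1 _ (coset_of_mem x)) mul1r.
Qed.

End Index.

Theorem lemma5p9 (K : finFieldType) (p : nat) (hp : p \in [pchar K])
    (L : closedFieldType) (iota : {rmorphism K -> L}) (halg : integralRange iota)
    (n : nat) (S : {pred 'rV[int]_n}) (hS : sublattice S)
    (s : seq 'rV[int]_n) (hs : coset_transversal S s) :
  characteristic L S <-> coprime (size s) p.
Proof.
have pc : p \in [pchar L] := rmorph_pchar iota hp.
split; [exact: coprime_index_of_characteristic | exact: characteristic_of_coprime_index].
Qed.
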